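(* Fix $\varepsilon\in\{1,-1\}$, $m\in\{1,2,5,7,8,10,11,13,14,16,17,19,22,23\}$, and a nonnegative integer $n$ with $\delta_m(n)$ squarefree. Let $\ell$ be a prime of bad reduction for $E_{m,n}$. Then $E_{m,n}$ has multiplicative reduction at $\ell$, and: (i) if $\ell=2$, the reduction is split; (ii) if $\ell\mid m+24n$, the reduction is split; (iii) if $\ell\mid f_m(n)$, the reduction is split when $\ell\equiv1\pmod3$ and nonsplit when $\ell\equiv2\pmod3$.
   Context: Let $f_m(n)=62208n^2+(5184m-432\varepsilon)n+(108m^2-18\varepsilon m+1)$; $i=1$ if $m$ odd, $i=2$ if $m$ even and $m\ne8,16$, $i=4$ if $m\in\{8,16\}$; $\delta_m(n)=2^{1-i}(m+24n)f_m(n)$. Put $A=18(m+24n)-\varepsilon$, $B=4\varepsilon/9$, $D=-3$, $r=1/3+A^2$, $H(m,n)=\frac1{16}(2ABD+2A^2Dr+3r^2)$, $J(m,n)=\frac1{64}(B^2D+2ABDr+A^2Dr^2+r^3)$ (integers), and $E_{m,n}:y^2+xy=x^3+H(m,n)x+J(m,n)$. *)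

From HB Require Import structures.
From mathcomp Require Import all_boot all_order all_algebra.
Set Implicit Arguments. Unset Strict Implicit. Unset Printing Implicit Defensive.
Import Order.TTheory GRing.Theory Num.Theory.
Local Open Scope ring_scope.

(* y^2 + a1 xy + a3 y = x^3 + a2 x^2 + a4 x + a6 over Q *)
Record wmodel := WModel { wa1 : rat; wa2 : rat; wa3 : rat; wa4 : rat; wa6 : rat }.

Definition disc (E : wmodel) : rat :=
  let a1 := wa1 E in let a2 := wa2 E in let a3 := wa3 E in
  let a4 := wa4 E in let a6 := wa6 E in
  let b2 := a1 ^+ 2 + 4 * a2 in
  let b4 := 2 * a4 + a1 * a3 in
  let b6 := a3 ^+ 2 + 4 * a6 in
  let b8 := a1 ^+ 2 * a6 + 4 * a2 * a6 - a1 * a3 * a4 + a2 * a3 ^+ 2 - a4 ^+ 2 in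
  - b2 ^+ 2 * b8 - 8 * b4 ^+ 3 - 27 * b6 ^+ 2 + 9 * b2 * b4 * b6.

(* Change of variables x = u^2 x' + r, y = u^3 y' + u^2 s x' + t (Silverman III.1) *)
Definition transform (E : wmodel) (u r s t : rat) : wmodel :=
  let a1 := wa1 E in let a2 := wa2 E in let a3 := wa3 E in
  let a4 := wa4 E in let a6 := wa6 E in
  WModel ((a1 + 2 * s) / u)
         ((a2 - s * a1 + 3 * r - s ^+ 2) / u ^+ 2)
         ((a3 + r * a1 + 2 * t) / u ^+ 3)
         ((a4 - s * a3 + 2 * r * a2 - (t + r * s) * a1 + 3 * r ^+ 2 - 2 * s * t) / u ^+ 4)
         ((a6 + r * a4 + r ^+ 2 * a2 + r ^+ 3 - t * a3 - t ^+ 2 - r * t * a1) / u ^+ 6).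

Definition wiso (E E' : wmodel) : Prop :=
  exists u r s t : rat, u != 0 /\ E' = transform E u r s t.

Definition pintegral (p : nat) (x : rat) : bool := ~~ (p %| `|denq x|)%N.
Definition model_pintegral (p : nat) (E : wmodel) : bool :=
  [&& pintegral p (wa1 E), pintegral p (wa2 E), pintegral p (wa3 E),
      pintegral p (wa4 E) & pintegral p (wa6 E)].
Definition vp (p : nat) (x : rat) : nat := logn p `|numq x|.

Definition minimal_model_at (p : nat) (E E' : wmodel) : Prop :=
  wiso E E' /\ model_pintegral p E' /\
  forall E'', wiso E E'' -> model_pintegral p E'' ->
    (vp p (disc E') <= vp p (disc E''))%N.

Definition redF (p : nat) (x : rat) : 'F_p := (numq x)%:~R / (denq x)%:~R.

Definition singular_point (K : fieldType) (b1 b2 b3 b4 b6 x0 y0 : K) : Prop :=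
  [/\ y0 ^+ 2 + b1 * x0 * y0 + b3 * y0 - x0 ^+ 3 - b2 * x0 ^+ 2 - b4 * x0 - b6 = 0,
      b1 * y0 - 3 * x0 ^+ 2 - 2 * b2 * x0 - b4 = 0 &
      2 * y0 + b1 * x0 + b3 = 0].
(* tangent cone at (x0,y0) is Y^2 + b1 XY - (3 x0 + b2) X^2 *)
Definition is_node (K : fieldType) (b1 b2 x0 : K) : Prop :=
  b1 ^+ 2 + 4 * (3 * x0 + b2) != 0.
Definition rational_tangents (K : fieldType) (b1 b2 x0 : K) : Prop :=
  exists l : K, l ^+ 2 + b1 * l - (3 * x0 + b2) = 0.

Definition red_node (p : nat) (E' : wmodel) (x0 y0 : 'F_p) : Prop :=
  singular_point (redF p (wa1 E')) (redF p (wa2 E')) (redF p (wa3 E'))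
                 (redF p (wa4 E')) (redF p (wa6 E')) x0 y0 /\
  is_node (redF p (wa1 E')) (redF p (wa2 E')) x0.

Definition bad_reduction (p : nat) (E : wmodel) : Prop :=
  exists E', minimal_model_at p E E' /\ (0 < vp p (disc E'))%N.
Definition multiplicative_reduction (p : nat) (E : wmodel) : Prop :=
  exists E', minimal_model_at p E E' /\ exists x0 y0 : 'F_p, red_node E' x0 y0.
Definition split_multiplicative (p : nat) (E : wmodel) : Prop :=
  exists E', minimal_model_at p E E' /\ exists x0 y0 : 'F_p,
    red_node E' x0 y0 /\ rational_tangents (redF p (wa1 E')) (redF p (wa2 E')) x0.
Definition nonsplit_multiplicative (p : nat) (E : wmodel) : Prop :=
  multiplicative_reduction p E /\ ~ split_multiplicative p E.

Definition f_m (m n : nat) (eps : int) : int :=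
  (* 62208 = 2^8*3^5, 5184 = 2^6*3^4, 432 = 2^4*3^3 (written as products
     to avoid building large unary numerals) *)
  (2 ^+ 8 * 3 ^+ 5) * (n%:Z) ^+ 2
  + ((2 ^+ 6 * 3 ^+ 4) * m%:Z - (2 ^+ 4 * 3 ^+ 3) * eps) * n%:Z
  + (108 * (m%:Z) ^+ 2 - 18 * eps * m%:Z + 1).

Definition i_m (m : nat) : nat :=
  if odd m then 1%N else if (m == 8%N) || (m == 16%N) then 4%N else 2%N.

Definition delta_m (m n : nat) (eps : int) : rat :=
  ((m + 24 * n)%N%:R * (f_m m n eps)%:~R) / (2 ^ (i_m m - 1))%N%:R.

Definition sqfree_int (z : int) : Prop :=
  forall p : nat, prime p -> ~~ (p * p %| `|z|)%N.
Definition squarefree_rat (q : rat) : Prop :=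
  exists z : int, q = z%:~R /\ sqfree_int z.

Definition H_mn (m n : nat) (eps : int) : rat :=
  let A : rat := (18 * (m + 24 * n)%N%:Z - eps)%:~R in
  let B : rat := 4 * eps%:~R / 9 in
  let D : rat := -3 in
  let r : rat := 3^-1 + A ^+ 2 in
  (2 * A * B * D + 2 * A ^+ 2 * D * r + 3 * r ^+ 2) / 16.

Definition J_mn (m n : nat) (eps : int) : rat :=
  let A : rat := (18 * (m + 24 * n)%N%:Z - eps)%:~R in
  let B : rat := 4 * eps%:~R / 9 in
  let D : rat := -3 in
  let r : rat := 3^-1 + A ^+ 2 in
  (B ^+ 2 * D + 2 * A * B * D * r + A ^+ 2 * D * r ^+ 2 + r ^+ 3) / 64.

Definition E_mn (m n : nat) (eps : int) : wmodel :=
  WModel 1 0 0 (H_mn m n eps) (J_mn m n eps).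

From mathcomp Require Import all_boot all_order all_algebra.
From mathcomp Require Import ring zify finfield.
Import GRing.Theory Num.Theory.
Local Open Scope ring_scope.

(* With t = eps (m + 24 n) and w = t (t + 1) / 2, the curve E_{m,n} is
   y^2 + xy = x^3 + h x + j with integers h, j polynomial in t and w, and its
   discriminant is -2 t f(t), where f(t) = f_m(n).  Squarefreeness of delta_m(n)
   bounds the valuation of the discriminant by 5 < 12, so this model is minimal at
   every prime and a prime l of bad reduction divides 2 t f(t).  Modulo l the
   singular point is a node with rational tangents: at (0, h) if l = 2, at the
   origin if l | t, and at x = 3t/2 - 1/4 if l | f(t), where the tangent cone has
   discriminant b = 18 t - 2, a primitive cube root of unity and hence a square.
   As 3 f(t) = b^2 + b + 1, no prime l = 2 mod 3 divides f(t), so the nonsplit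
   case never occurs. *)

Lemma disc_transform (E : wmodel) (u r s t : rat) : u != 0 ->
  disc (transform E u r s t) * u ^+ 12 = disc E.
Proof. by case: E => a1 a2 a3 a4 a6 u0; rewrite /disc /transform /=; field. Qed.

Lemma wiso_refl (E : wmodel) : wiso E E.
Proof.
exists 1, 0, 0, 0; split; first exact: oner_neq0.
by case: E => a1 a2 a3 a4 a6; rewrite /transform /=; congr WModel; field.
Qed.

Section PIntegral.
Variable p : nat.
Hypothesis p_prime : prime p.

Lemma pintegralP (x : rat) :
  reflect (exists2 b : int, ~~ (p %| `|b|)%N & exists a : int, x * b%:~R = a%:~R)
          (pintegral p x).
Proof.
apply: (iffP idP) => [px | [b pb [a xb]]].
  by exists (denq x) => //; exists (numq x); rewrite numqE.
apply: contra pb => pd.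
have e : numq x * b = a * denq x.
  by apply/eqP; rewrite -(eqr_int rat) !rmorphM /= -xb numqE; apply/eqP; ring.
have : (`|denq x| %| `|numq x| * `|b|)%N by rewrite -abszM e abszM dvdn_mull.
rewrite Gauss_dvdr; last by rewrite coprime_sym coprime_num_den.
exact: dvdn_trans.
Qed.

Lemma pintegralD (x y : rat) : pintegral p x -> pintegral p y -> pintegral p (x + y).
Proof.
move=> /pintegralP[b pb [a xb]] /pintegralP[d pd [c yd]]; apply/pintegralP.
exists (b * d); first by rewrite abszM Euclid_dvdM // negb_or pb pd.
by exists (a * d + c * b); rewrite !rmorphD !rmorphM /= -xb -yd; ring.
Qed.

Lemma pintegralM (x y : rat) : pintegral p x -> pintegral p y -> pintegral p (x * y).
Proof.
move=> /pintegralP[b pb [a xb]] /pintegralP[d pd [c yd]]; apply/pintegralP.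
exists (b * d); first by rewrite abszM Euclid_dvdM // negb_or pb pd.
by exists (a * c); rewrite !rmorphM /= -xb -yd; ring.
Qed.

Lemma pintegralN (x : rat) : pintegral p x -> pintegral p (- x).
Proof.
move=> /pintegralP[b pb [a xb]]; apply/pintegralP.
by exists b => //; exists (- a); rewrite rmorphN /= -xb; ring.
Qed.

Lemma pintegral_int (z : int) : pintegral p z%:~R.
Proof. by rewrite /pintegral denq_int Euclid_dvd1. Qed.

Lemma pintegral_nat (k : nat) : pintegral p k%:R.
Proof. exact: (pintegral_int k). Qed.

Lemma pintegralX (x : rat) (k : nat) : pintegral p x -> pintegral p (x ^+ k).
Proof.
move=> px; elim: k => [|k IHk]; first exact: (pintegral_nat 1).
by rewrite exprS pintegralM.
Qed.

Lemma pintegral_disc (E : wmodel) : model_pintegral p E -> pintegral p (disc E).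
Proof.
case: E => a1 a2 a3 a4 a6 /and5P[/= p1 p2 p3 p4 p6]; rewrite /disc /=.
repeat match goal with
  | |- is_true (pintegral _ (_ + _)) => apply: pintegralD
  | |- is_true (pintegral _ (- _)) => apply: pintegralN
  | |- is_true (pintegral _ (_ * _)) => apply: pintegralM
  | |- is_true (pintegral _ (_ ^+ _)) => apply: pintegralX
  | |- _ => first [assumption | apply: pintegral_nat]
  end.
Qed.

Lemma logn_denq {x : rat} : pintegral p x -> logn p `|denq x| = 0%N.
Proof. by move=> px; apply: logn_coprime; rewrite prime_coprime. Qed.

(* Writing [v] for [logn p], [x = y u^12] gives
   [vp x + 12 v (den u) = vp y + 12 v (num u)], where one of [v (num u)] and
   [v (den u)] vanishes and [vp x < 12] excludes [v (den u) > 0]. *)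
Lemma vp_scale12 (x y u : rat) :
  x != 0 -> pintegral p x -> pintegral p y -> x = y * u ^+ 12 ->
  (vp p x < 12)%N -> (vp p x <= vp p y)%N.
Proof.
move=> x0 px py exu.
have : y * u ^+ 12 != 0 by rewrite -exu.
rewrite mulf_eq0 expf_eq0 /= negb_or => /andP[y0 u0].
have e : numq x * denq y * denq u ^+ 12 = numq y * denq x * numq u ^+ 12.
  by apply/eqP; rewrite -(eqr_int rat) !(rmorphXn, rmorphM) /= !numqE exu; apply/eqP; ring.
have gt0 (z : int) : z != 0 -> (0 < `|z|)%N by rewrite absz_gt0.
have nu0 : numq u != 0 by rewrite numq_eq0.
have := congr1 (logn p \o absz) e; rewrite /= !(abszX, abszM).
rewrite !(lognX, lognM) ?muln_gt0 ?expn_gt0 ?gt0 ?numq_eq0 ?denq_neq0 //.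
rewrite (logn_denq px) (logn_denq py).
have := logn_gcd p (gt0 _ nu0) (gt0 _ (denq_neq0 u)).
by rewrite (eqP (coprime_num_den u)) logn1 /vp; lia.
Qed.

Lemma minimal_model_at_refl (E : wmodel) :
  model_pintegral p E -> disc E != 0 -> (vp p (disc E) < 12)%N ->
  minimal_model_at p E E.
Proof.
move=> pE dE0 vE; split; first exact: wiso_refl.
split=> // _ [u [r [s [t [u0 ->]]]]] pE'.
by apply: (@vp_scale12 _ _ u); rewrite ?disc_transform ?pintegral_disc.
Qed.

End PIntegral.

Lemma redF_int (p : nat) (z : int) : redF p z%:~R = z%:~R.
Proof. by rewrite /redF numq_int denq_int rmorph1 divr1. Qed.

Lemma bad_reduction_vp_gt0 {p : nat} {E E0 : wmodel} :
  minimal_model_at p E E0 -> bad_reduction p E -> (0 < vp p (disc E0))%N.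
Proof.
case=> isoE0 [pE0 _] [E' [[_ [_ minE']] vE']].
exact: leq_trans vE' (minE' E0 isoE0 pE0).
Qed.

Definition split_node {K : fieldType} (a1 a2 a3 a4 a6 : K) : Prop :=
  exists x0 y0 : K, [/\ singular_point a1 a2 a3 a4 a6 x0 y0,
                        is_node a1 a2 x0 & rational_tangents a1 a2 x0].

Lemma split_multiplicative_of_minimal (p : nat) (E E' : wmodel) :
  minimal_model_at p E E' ->
  split_node (redF p (wa1 E')) (redF p (wa2 E')) (redF p (wa3 E'))
             (redF p (wa4 E')) (redF p (wa6 E')) ->
  split_multiplicative p E.
Proof. by move=> minE' [x0 [y0 [sing node tang]]]; exists E'; split=> //; exists x0, y0. Qed.

Lemma multiplicative_of_split (p : nat) (E : wmodel) :
  split_multiplicative p E -> multiplicative_reduction p E.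
Proof. by case=> E' [minE' [x0 [y0 [node _]]]]; exists E'; split=> //; exists x0, y0. Qed.

(* The discriminant of y^2 + xy = x^3 + h x + j. *)
Definition disc_hj {R : pzRingType} (h j : R) : R :=
  h ^+ 2 - j + 2 * (36 * h * j - 32 * h ^+ 3 - 216 * j ^+ 2).

Definition Ehj (h j : int) : wmodel := WModel 1 0 0 h%:~R j%:~R.

(* H(m,n) and J(m,n) as polynomials in t = eps (m + 24 n) and w = t (t + 1) / 2, and
   f_m(n) as a polynomial in t. *)
Definition Ht {R : pzRingType} (t w : R) : R :=
  - (3 ^+ 6) * w + (3 * 5 ^+ 3) * t + (2 * 3 ^+ 7) * t ^+ 3 - (3 ^+ 9) * t ^+ 4.
Definition Jt {R : pzRingType} (t w : R) : R :=
  - (3 ^+ 4 * 7) * w ^+ 2 + 2 * t + (2 * 3 ^+ 4 * 5 ^+ 2) * t ^+ 3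
  - (2 * 3 ^+ 4 * 313) * t ^+ 4 + (2 * 3 ^+ 11) * t ^+ 5 - (2 * 3 ^+ 12) * t ^+ 6.
Definition ft {R : pzRingType} (t : R) : R := 108 * t ^+ 2 - 18 * t + 1.

Section NodalCubic.
Variable K : fieldType.

Lemma node_origin : is_node (1 : K) 0 0 /\ rational_tangents (1 : K) 0 0.
Proof.
split; last by exists 0; ring.
by rewrite /is_node (_ : _ + _ = 1) ?oner_neq0 //; ring.
Qed.

Lemma split_node_origin : split_node (1 : K) 0 0 0 0.
Proof. by exists 0, 0; have [] := node_origin; split=> //; split; ring. Qed.

Lemma split_node_char2 (h j : K) : 2 = 0 :> K -> disc_hj h j = 0 -> split_node 1 0 0 h j.
Proof.
rewrite /disc_hj => char2; rewrite char2 mul0r addr0 => /eqP; rewrite subr_eq0 => /eqP <-.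
exists 0, h; have [] := node_origin; split=> //; split; rewrite ?char2; ring.
Qed.

Hypothesis K2 : (2 : K) != 0.

Lemma natr_pow2_neq0 (k : nat) : (2 ^ k)%:R != 0 :> K.
Proof. by rewrite natrX expf_neq0. Qed.

(* The tangent cone at [(x0, -x0/2)] has discriminant [b = 1 + 12 x0]; when [b] is a
   primitive cube root of unity it is the square of [b ^+ 2]. *)
Lemma split_tangents_cube_root (x0 : K) :
  (1 + 12 * x0) ^+ 2 + (1 + 12 * x0) + 1 = 0 ->
  is_node 1 0 x0 /\ rational_tangents 1 0 x0.
Proof.
set b := 1 + 12 * x0 => b_root; split.
  rewrite /is_node (_ : _ + _ = b); last by rewrite /b; ring.
  by apply/eqP => b0; move: b_root; rewrite b0 expr0n /= !add0r => /eqP; rewrite oner_eq0.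
exists ((b ^+ 2 - 1) / 2).
transitivity (b * (b - 1) * (b ^+ 2 + b + 1) / 4).
  by rewrite /b; field; rewrite (natr_pow2_neq0 2) K2.
by rewrite b_root mulr0 mul0r.
Qed.

Lemma singular_point_Ht_Jt (t w : K) : 2 * w = t ^+ 2 + t -> ft t = 0 ->
  singular_point 1 0 0 (Ht t w) (Jt t w) (3 * t / 2 - 1 / 4) (1 / 8 - 3 * t / 4).
Proof.
have [K4 K8 K16 K32] : [/\ 4 != 0 :> K, 8 != 0 :> K, 16 != 0 :> K & 32 != 0 :> K].
  by split; [exact: (natr_pow2_neq0 2) | exact: (natr_pow2_neq0 3)
            | exact: (natr_pow2_neq0 4) | exact: (natr_pow2_neq0 5)].
move=> hw ft0; have -> : w = (t ^+ 2 + t) / 2 by rewrite -hw; field; rewrite K2.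
(* Both equations are multiples of [ft t]; the cofactors come from polynomial division *)
split.
- transitivity ((17 / 32 * t + 3 ^+ 6 / 16 * t ^+ 2 - 3 ^+ 7 * 5 / 8 * t ^+ 3
                 + 3 ^+ 9 / 2 * t ^+ 4) * ft t).
    by rewrite /Ht /Jt /ft; field; rewrite ?K2 ?K4 ?K8 ?K16 ?K32.
  by rewrite ft0 mulr0.
- transitivity ((- 1 / 16 - 3 ^+ 4 / 8 * t + 3 ^+ 6 / 4 * t ^+ 2) * ft t).
    by rewrite /Ht /ft; field; rewrite ?K2 ?K4 ?K8 ?K16 ?K32.
  by rewrite ft0 mulr0.
- by field; rewrite ?K2 ?K4 ?K8 ?K16 ?K32.
Qed.

Lemma split_node_Ht_Jt (t w : K) : 2 * w = t ^+ 2 + t -> ft t = 0 ->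
  split_node 1 0 0 (Ht t w) (Jt t w).
Proof.
move=> hw ft0; have [node tang] : is_node 1 0 (3 * t / 2 - 1 / 4) /\
                                   rational_tangents 1 0 (3 * t / 2 - 1 / 4).
  apply: split_tangents_cube_root; transitivity (3 * ft t); last by rewrite ft0 mulr0.
  by rewrite /ft; field; rewrite (natr_pow2_neq0 2) K2.
by exists (3 * t / 2 - 1 / 4), (1 / 8 - 3 * t / 4); split=> //; exact: singular_point_Ht_Jt.
Qed.

End NodalCubic.

Lemma intr_half_sqr_add (R : comNzRingType) {t w : int} :
  2 * w = t ^+ 2 + t -> 2 * (w%:~R : R) = t%:~R ^+ 2 + t%:~R.
Proof. by move=> hw; transitivity ((2 * w)%:~R : R); [ring | rewrite hw; ring]. Qed.

Lemma intr_disc_hj (R : comNzRingType) (h j : int) :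
  (disc_hj h j)%:~R = disc_hj (h%:~R : R) j%:~R.
Proof. by rewrite /disc_hj; ring. Qed.

Lemma intr_Ht (R : comNzRingType) (t w : int) : (Ht t w)%:~R = Ht (t%:~R : R) w%:~R.
Proof. by rewrite /Ht; ring. Qed.

Lemma intr_Jt (R : comNzRingType) (t w : int) : (Jt t w)%:~R = Jt (t%:~R : R) w%:~R.
Proof. by rewrite /Jt; ring. Qed.

Lemma intr_ft (R : comNzRingType) (t : int) : (ft t)%:~R = ft (t%:~R : R).
Proof. by rewrite /ft; ring. Qed.

Lemma Ht00 (R : comNzRingType) : Ht 0 0 = 0 :> R.
Proof. by rewrite /Ht; ring. Qed.

Lemma Jt00 (R : comNzRingType) : Jt 0 0 = 0 :> R.
Proof. by rewrite /Jt; ring. Qed.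

Lemma exists_half_sqr_add (t : int) : exists w : int, 2 * w = t ^+ 2 + t.
Proof.
have r_ge0 := modz_ge0 t (isT : 2 != 0 :> int).
have r_lt2 := ltz_pmod t (isT : 0 < 2 :> int).
move: (divz_eq t 2) r_ge0 r_lt2; move: (t %/ 2)%Z (t %% 2)%Z => q r -> r_ge0 r_lt2.
have [-> | ->] : r = 0 \/ r = 1 by lia.
- by exists (q * (q * 2 + 1)); ring.
- by exists ((q * 2 + 1) * (q + 1)); ring.
Qed.

Lemma ft_neq0 (t : int) : ft t != 0.
Proof. by rewrite /ft (_ : _ + 1 = 2 * (54 * t ^+ 2 - 9 * t) + 1); [lia | ring]. Qed.

Lemma disc_Ht_Jt_field (F : fieldType) (t w : F) : 2 != 0 :> F ->
  2 * w = t ^+ 2 + t -> disc_hj (Ht t w) (Jt t w) = - 2 * t * ft t.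
Proof.
move=> F2 hw; have -> : w = (t ^+ 2 + t) / 2 by rewrite -hw; field; exact: F2.
by rewrite /disc_hj /Ht /Jt /ft; field; exact: F2.
Qed.

Lemma disc_Ht_Jt (t w : int) :
  2 * w = t ^+ 2 + t -> disc_hj (Ht t w) (Jt t w) = - 2 * t * ft t.
Proof.
move=> /(intr_half_sqr_add rat) hw; apply: (@intr_inj rat).
transitivity (disc_hj (Ht (t%:~R : rat) w%:~R) (Jt t%:~R w%:~R)).
  by rewrite /disc_hj /Ht /Jt; ring.
by rewrite disc_Ht_Jt_field // /ft; ring.
Qed.

Definition t_mn (m n : nat) (eps : int) : int := eps * (m + 24 * n)%N%:Z.

Lemma E_mn_Ehj {eps : int} {m n : nat} {w : int} : eps = 1 \/ eps = -1 ->
  2 * w = t_mn m n eps ^+ 2 + t_mn m n eps ->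
  E_mn m n eps = Ehj (Ht (t_mn m n eps) w) (Jt (t_mn m n eps) w).
Proof.
move=> heps /(intr_half_sqr_add rat) hw.
have wE : (w%:~R : rat) = ((t_mn m n eps)%:~R ^+ 2 + (t_mn m n eps)%:~R) / 2.
  by rewrite -hw; field.
rewrite /E_mn /Ehj; congr WModel.
- transitivity (Ht (t_mn m n eps)%:~R (w%:~R : rat)); last by rewrite /Ht; ring.
  by rewrite wE /H_mn /Ht /t_mn; case: heps => ->; field.
- transitivity (Jt (t_mn m n eps)%:~R (w%:~R : rat)); last by rewrite /Jt; ring.
  by rewrite wE /J_mn /Jt /t_mn; case: heps => ->; field.
Qed.

Lemma f_m_ft (eps : int) (m n : nat) :
  eps = 1 \/ eps = -1 -> f_m m n eps = ft (t_mn m n eps).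
Proof. by rewrite /f_m /ft /t_mn; case=> ->; ring. Qed.

(* Unfolding [Ht] or [Jt] at integer arguments computes numerals such as
   [2 * 3 ^+ 12] in unary; this keeps conversion from attempting it. *)
Opaque Ht Jt.

Section ReductionModPrime.
Context {p : nat}.
Hypothesis p_prime : prime p.

Lemma intr_Fp_eq0 (z : int) : ((z%:~R : 'F_p) == 0) = (p %| `|z|)%N.
Proof. by rewrite -(dvdz_pcharf (pchar_Fp p_prime)). Qed.

Lemma Fp_two_eq0 : ((2 : 'F_p) == 0) = (p == 2).
Proof. by rewrite -(dvdn_pcharf (pchar_Fp p_prime)) dvdn_prime2. Qed.

(* A root [b] satisfies [b ^+ 3 = 1], so [b ^+ p = b] and [p = 2 mod 3] give
   [b ^+ 2 = b]; then [3 = 4 (b^2 + b + 1) - (2 b + 1)^2 = 0] in ['F_p]. *)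
Lemma Fp_cube_root_unity_mod3 (b : 'F_p) : (p %% 3 = 2)%N -> b ^+ 2 + b + 1 != 0.
Proof.
move=> p3; apply/eqP => b_root.
have b3 : b ^+ 3 = 1.
  by apply/eqP; rewrite -subr_eq0 -(mulr0 (b - 1)) -b_root; apply/eqP; ring.
have b2 : b ^+ 2 = b.
  rewrite -[RHS](expf_card b) card_Fp // (congr1 (GRing.exp b) (divn_eq p 3)) p3.
  by rewrite exprD mulnC exprM b3 expr1n mul1r.
have three0 : (3 : 'F_p) = 0.
  transitivity (4 * (b ^+ 2 + b + 1) - ((b ^+ 2 + b + 1) - (b ^+ 2 - b)) ^+ 2); first by ring.
  by rewrite b_root b2 subrr subr0 mulr0 expr0n /= subr0.
have : (p %| 3)%N by rewrite (dvdn_pcharf (pchar_Fp p_prime)) three0.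
by rewrite dvdn_prime2 // => /eqP p_eq3; rewrite p_eq3 in p3.
Qed.

Lemma prime_dvd_ft_mod3 {t : int} : (p %| `|ft t|)%N -> (p %% 3 != 2)%N.
Proof.
rewrite -intr_Fp_eq0 intr_ft => /eqP ft0; apply/eqP => p3.
apply: (negP (Fp_cube_root_unity_mod3 (18 * t%:~R - 2) p3)); apply/eqP.
by transitivity (3 * ft (t%:~R : 'F_p)); [rewrite /ft; ring | rewrite ft0 mulr0].
Qed.

Lemma split_node_Fp_Ht_Jt (t w : int) : 2 * w = t ^+ 2 + t ->
  (p %| `|disc_hj (Ht t w) (Jt t w)|)%N ->
  split_node (1 : 'F_p) 0 0 (Ht t w)%:~R (Jt t w)%:~R.
Proof.
move=> hw pd; have [p2 | p2] := eqVneq p 2.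
  apply: split_node_char2; first by apply/eqP; rewrite Fp_two_eq0 p2.
  by rewrite -(intr_disc_hj 'F_p); apply/eqP; rewrite intr_Fp_eq0.
have two_neq0 : (2 : 'F_p) != 0 by rewrite Fp_two_eq0.
have hw' := intr_half_sqr_add 'F_p hw.
rewrite (intr_Ht _ t w) (intr_Jt _ t w).
move: pd; rewrite disc_Ht_Jt // !abszM !Euclid_dvdM // => /orP[/orP[p_2 | p_t] | p_f].
- by move: p_2; rewrite dvdn_prime2 // (negbTE p2).
- have t0 : (t%:~R : 'F_p) = 0 by apply/eqP; rewrite intr_Fp_eq0.
  have w0 : (w%:~R : 'F_p) = 0.
    apply/eqP; move: hw'; rewrite t0 expr0n /= addr0 => /eqP.
    by rewrite mulf_eq0 (negbTE two_neq0).
  by rewrite t0 w0 Ht00 Jt00; exact: split_node_origin.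
- by apply: split_node_Ht_Jt => //; rewrite -intr_ft; apply/eqP; rewrite intr_Fp_eq0.
Qed.

End ReductionModPrime.

Lemma disc_Ehj (h j : int) : disc (Ehj h j) = (disc_hj h j)%:~R.
Proof. by rewrite /disc /disc_hj /=; ring. Qed.

Lemma minimal_model_at_Ehj {p : nat} {h j : int} : prime p -> disc_hj h j != 0 ->
  (logn p `|disc_hj h j| < 12)%N -> minimal_model_at p (Ehj h j) (Ehj h j).
Proof.
move=> pp d0 dlt; apply: minimal_model_at_refl; rewrite ?disc_Ehj ?intr_eq0 /vp ?numq_int //.
by rewrite /model_pintegral /pintegral /= !denq_int Euclid_dvd1.
Qed.

Lemma bad_reduction_Ehj {p : nat} {h j : int} :
  minimal_model_at p (Ehj h j) (Ehj h j) -> bad_reduction p (Ehj h j) ->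
  (p %| `|disc_hj h j|)%N.
Proof.
move=> Emin /(bad_reduction_vp_gt0 Emin).
by rewrite disc_Ehj /vp numq_int logn_gt0 mem_primes => /and3P[].
Qed.

Lemma split_multiplicative_Ehj {p : nat} {h j : int} :
  minimal_model_at p (Ehj h j) (Ehj h j) ->
  split_node (1 : 'F_p) 0 0 h%:~R j%:~R -> split_multiplicative p (Ehj h j).
Proof.
move=> Emin node; apply: split_multiplicative_of_minimal Emin _.
by rewrite /= (redF_int p 1) (redF_int p 0) !redF_int.
Qed.

Lemma split_multiplicative_Ht_Jt {p : nat} {t w : int} :
  prime p -> t != 0 -> 2 * w = t ^+ 2 + t ->
  (logn p `|disc_hj (Ht t w) (Jt t w)| < 12)%N ->
  bad_reduction p (Ehj (Ht t w) (Jt t w)) ->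
  split_multiplicative p (Ehj (Ht t w) (Jt t w)).
Proof.
move=> pp t0 hw dlt bad.
have d0 : disc_hj (Ht t w) (Jt t w) != 0 by rewrite disc_Ht_Jt // !mulf_neq0 ?ft_neq0.
have Emin := minimal_model_at_Ehj pp d0 dlt.
apply: (split_multiplicative_Ehj Emin); apply: split_node_Fp_Ht_Jt => //.
exact: bad_reduction_Ehj Emin bad.
Qed.

Lemma logn_sqfree_int {p : nat} {z : int} : prime p -> sqfree_int z -> (logn p `|z| <= 1)%N.
Proof.
move=> pp sqz; have [-> | z0] := eqVneq z 0; first by rewrite logn0.
by rewrite leqNgt -(@pfactor_dvdn p 2) ?absz_gt0 //; exact: sqz.
Qed.

Lemma logn_sqfree_div_pow2 {p k : nat} {a : int} : prime p -> a != 0 ->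
  squarefree_rat (a%:~R / (2 ^ k)%:R) -> (logn p `|a| <= k.+1)%N.
Proof.
move=> pp a0 [z [zE sqz]].
have aE : a = z * (2 ^ k)%:R.
  by apply: (@intr_inj rat); rewrite rmorphM /= rmorph_nat -zE divfK // pnatr_eq0 expn_eq0.
have z0 : z != 0 by apply: contraNneq a0 => z0; rewrite aE z0 mul0r.
rewrite aE abszM natz absz_nat lognM ?absz_gt0 ?expn_gt0 // lognX.
have := logn_sqfree_int pp sqz; have : (logn p 2 <= 1)%N by rewrite logn_prime //; case: eqP.
nia.
Qed.

Lemma logn_disc_lt12 {eps : int} {m n p : nat} {w : int} :
  eps = 1 \/ eps = -1 -> prime p -> (0 < m + 24 * n)%N ->
  squarefree_rat (delta_m m n eps) -> 2 * w = t_mn m n eps ^+ 2 + t_mn m n eps ->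
  (logn p `|disc_hj (Ht (t_mn m n eps) w) (Jt (t_mn m n eps) w)| < 12)%N.
Proof.
move=> heps pp K0 sq hw; set a : int := (m + 24 * n)%N%:Z * f_m m n eps.
have a0 : a != 0 by rewrite mulf_neq0 ?f_m_ft ?ft_neq0 // -lt0n.
have la : (logn p `|a| <= (i_m m - 1).+1)%N.
  by apply: logn_sqfree_div_pow2 pp a0 _; rewrite /a rmorphM.
have -> : `|disc_hj (Ht (t_mn m n eps) w) (Jt (t_mn m n eps) w)|%N = (2 * `|a|)%N.
  by rewrite disc_Ht_Jt // -f_m_ft // /t_mn /a !abszM; case: heps => -> /=; rewrite mul1n mulnA.
have i4 : (i_m m <= 4)%N by rewrite /i_m; case: ifP => _ //; case: ifP.
rewrite lognM ?absz_gt0 // logn_prime //; case: eqP => _ /=; lia.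
Qed.

Theorem proposition3p4 (eps : int) (m n l : nat) :
  (eps = 1 \/ eps = -1) ->
  m \in [:: 1; 2; 5; 7; 8; 10; 11; 13; 14; 16; 17; 19; 22; 23]%N ->
  squarefree_rat (delta_m m n eps) ->
  prime l ->
  bad_reduction l (E_mn m n eps) ->
  multiplicative_reduction l (E_mn m n eps) /\
  (l = 2%N -> split_multiplicative l (E_mn m n eps)) /\
  ((l %| m + 24 * n)%N -> split_multiplicative l (E_mn m n eps)) /\
  ((l %| `|f_m m n eps|)%N ->
     ((l %% 3 = 1)%N -> split_multiplicative l (E_mn m n eps)) /\
     ((l %% 3 = 2)%N -> nonsplit_multiplicative l (E_mn m n eps))).
Proof.
move=> heps hm hsq pl hbad.
have K0 : (0 < m + 24 * n)%N.
  by rewrite addn_gt0; apply/orP; left; apply: contraTT hm; rewrite -eqn0Ngt => /eqP ->.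
have t0 : t_mn m n eps != 0 by rewrite /t_mn mulf_neq0 -?lt0n //; case: heps => ->.
have [w hw] := exists_half_sqr_add (t_mn m n eps).
have dlt := logn_disc_lt12 heps pl K0 hsq hw.
rewrite (E_mn_Ehj heps hw) f_m_ft // in hbad *.
have lsplit := split_multiplicative_Ht_Jt pl t0 hw dlt hbad.
split; first exact: multiplicative_of_split.
split=> [_ // |]; split=> [_ // | lf].
by split=> // l3; move: (prime_dvd_ft_mod3 pl lf); rewrite l3.
Qed.
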